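(* Let $n=2^m$, and let $\mathbf{G}_n^{\mathrm{ABS+}}$ be an ABS+ encoding matrix of size $n$, specified by the sets $\mathcal{I}_S^{(N)},\mathcal{I}_A^{(N)}$ for $N=2,4,\dots,n$. Then for any $u\in\{0,1\}^n$, the codeword $u\,\mathbf{G}_n^{\mathrm{ABS+}}$ can be computed (layer by layer, applying for $N=n,n/2,\dots,2$ the transforms of $\mathbf{Q}_N$ and then the $2\times 2$ polar transforms to the appropriate strided subvectors) using $O(n\log n)$ elementary bit operations.
   Context: $\mathbf{G}_2^{\mathrm{polar}}=\begin{bmatrix}1&0\\1&1\end{bmatrix}$, $\otimes$ is the Kronecker product, arithmetic over $\mathbb{F}_2$. For $1\le i\le N-1$, $\mathbf{S}_N^{(i)}$ (resp. $\mathbf{A}_N^{(i)}$) is the $N\times N$ binary matrix such that $u\mapsto u\mathbf{S}_N^{(i)}$ (resp. $u\mapsto u\mathbf{A}_N^{(i)}$) fixes all coordinates other than $u_i,u_{i+1}$ and maps $(u_i,u_{i+1})$ to $(u_{i+1},u_i)$ (resp. to $(u_i+u_{i+1},u_{i+1})$). ABS+ encoding matrices: $\mathbf{G}_2^{\mathrm{ABS+}}=\mathbf{Q}_2\mathbf{G}_2^{\mathrm{polar}}$ with $\mathbf{Q}_2=\mathbf{I}_2$, and for $N=4,8,\dots$, $\mathbf{G}_N^{\mathrm{ABS+}}=\mathbf{Q}_N(\mathbf{G}_{N/2}^{\mathrm{ABS+}}\otimes\mathbf{G}_2^{\mathrm{polar}})$ where $\mathbf{Q}_N=\big(\prod_{i\in\mathcal{I}_S^{(N)}}\mathbf{S}_N^{(i)}\big)\big(\prod_{i\in\mathcal{I}_A^{(N)}}\mathbf{A}_N^{(i)}\big)$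 for disjoint sets $\mathcal{I}_S^{(N)},\mathcal{I}_A^{(N)}\subseteq\{1,\dots,N-1\}$ of even integers whose union $\{i_1<\dots<i_t\}$ satisfies $i_{s+1}\ge i_s+4$. *)

From mathcomp Require Import all_boot all_order all_algebra.
Set Implicit Arguments. Unset Strict Implicit. Unset Printing Implicit Defensive.
Import GRing.Theory.
Local Open Scope ring_scope.

Lemma ord_div_proof m n (i : 'I_(m * n)) : (i %/ n < m)%N.
Proof.
case: n i => [|n] [i Hi] /=; first by rewrite muln0 in Hi.
by rewrite ltn_divLR.
Qed.
Lemma ord_mod_proof m n (i : 'I_(m * n)) : (i %% n < n)%N.
Proof.
case: n i => [|n] [i Hi] /=; first by rewrite muln0 in Hi.
by rewrite ltn_mod.
Qed.
Definition ord_div m n (i : 'I_(m * n)) : 'I_m := Ordinal (ord_div_proof i).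
Definition ord_mod m n (i : 'I_(m * n)) : 'I_n := Ordinal (ord_mod_proof i).

Definition kron (R : pzSemiRingType) m1 n1 m2 n2
    (A : 'M[R]_(m1, n1)) (B : 'M[R]_(m2, n2)) : 'M[R]_(m1 * m2, n1 * n2) :=
  \matrix_(i, j) (A (ord_div i) (ord_div j) * B (ord_mod i) (ord_mod j)).

Definition Gpolar : 'M['F_2]_2 :=
  \matrix_(i < 2, j < 2) (((i : nat) == j) || ((i : nat) == 1%N))%:R.

(* Paper coordinates are 1-based: u_1..u_N; Rocq coordinate k : 'I_N is u_{k+1}.
   S_N^(i): u |-> u S swaps u_i and u_{i+1} (0-based: i-1 and i). *)
Definition swap_idx (i j : nat) : nat :=
  if j == i.-1 then i else if j == i then i.-1 else j.
Definition Smx (N i : nat) : 'M['F_2]_N :=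
  \matrix_(k, j) ((k : nat) == swap_idx i j)%:R.
(* A_N^(i): u |-> u A maps (u_i, u_{i+1}) to (u_i + u_{i+1}, u_{i+1}). *)
Definition Amx (N i : nat) : 'M['F_2]_N :=
  \matrix_(k, j) (((k : nat) == j) || (((j : nat) == i.-1) && ((k : nat) == i)))%:R.

(* Q_N = (prod_{i in I_S} S_N^(i)) (prod_{i in I_A} A_N^(i)), products in increasing
   order of i; IS N, IA N are the sets I_S^(N), I_A^(N) as predicates on nat. *)
Definition Qmx (IS IA : nat -> pred nat) (N : nat) : 'M['F_2]_N :=
  foldr (fun i M => Smx N i *m M) 1%:M [seq i <- iota 1 N.-1 | IS N i] *m
  foldr (fun i M => Amx N i *m M) 1%:M [seq i <- iota 1 N.-1 | IA N i].

(* G_{2^k}^{ABS+}; the base case G_1 := I_1 makes G_2 = Q_2 (I_1 \otimes G_2^polar)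
   = Q_2 G_2^polar, as in the paper. *)
Fixpoint abs_mx (IS IA : nat -> pred nat) (k : nat) : 'M['F_2]_(2 ^ k) :=
  match k with
  | 0 => 1%:M
  | k'.+1 =>
      Qmx IS IA (2 ^ k'.+1) *m
      castmx (esym (expnSr 2 k'), esym (expnSr 2 k'))
             (kron (abs_mx IS IA k') Gpolar)
  end.

Definition abs_valid (IS IA : nat -> pred nat) (m : nat) : Prop :=
  forall k, (1 <= k <= m)%N ->
    let N := (2 ^ k)%N in
    (forall i, IS N i -> [&& 1 <= i, i <= N.-1 & ~~ odd i]%N) /\
    (forall i, IA N i -> [&& 1 <= i, i <= N.-1 & ~~ odd i]%N) /\
    (forall i, ~~ (IS N i && IA N i)) /\
    (forall i j, IS N i || IA N i -> IS N j || IA N j -> (i < j)%N -> (i + 4 <= j)%N).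

(* XorI i j : x_i <- x_i + x_j ;  SwapI i j : exchange x_i and x_j. Each costs 1. *)
Inductive bitop (n : nat) : Type :=
| XorI of 'I_n & 'I_n
| SwapI of 'I_n & 'I_n.

Definition step n (x : 'rV['F_2]_n) (o : bitop n) : 'rV['F_2]_n :=
  match o with
  | XorI i j => \row_k (if k == i then x 0 i + x 0 j else x 0 k)
  | SwapI i j => \row_k x 0 (if k == i then j else if k == j then i else k)
  end.

Definition run n (p : seq (bitop n)) (x : 'rV['F_2]_n) : 'rV['F_2]_n := foldl (@step n) x p.

From mathcomp Require Import all_boot all_order all_algebra zify.
Set Implicit Arguments. Unset Strict Implicit. Unset Printing Implicit Defensive.
Import GRing.Theory.
Local Open Scope ring_scope.

(* Since G_(2N) = Q_(2N) (G_N (x) G_2^polar) and codewords are row vectors,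
   u G_(2N) is obtained by applying Q_(2N) and then G_N (x) G_2^polar.  The
   factor Q_(2N) is a product of at most 2(2N - 1) adjacent swaps S^(i) and
   adjacent additions A^(i), each one bit operation.  In the interleaved
   indexing of the Kronecker product, v (G_N (x) G_2^polar) has even part
   (v_even + v_odd) G_N and odd part v_odd G_N: N additions followed by two
   runs of a program for G_N, on the even and on the odd positions.  Hence
   T(2N) <= 4N + N + 2 T(N) and T(2^k) <= 4 k 2^k. *)

Definition computes n (p : seq (bitop n)) (M : 'M['F_2]_n) :=
  forall u, run p u = u *m M.

Lemma run_cat n (p q : seq (bitop n)) x : run (p ++ q) x = run q (run p x).
Proof. by rewrite /run foldl_cat. Qed.

Lemma computes_nil n : computes ([::] : seq (bitop n)) 1%:M.
Proof. by move=> u; rewrite mulmx1. Qed.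

Lemma computes_cat n (p q : seq (bitop n)) A B :
  computes p A -> computes q B -> computes (p ++ q) (A *m B).
Proof. by move=> pA qB u; rewrite run_cat qB pA mulmxA. Qed.

Lemma computes_flatten n (progs : nat -> seq (bitop n)) (mxs : nat -> 'M_n) s :
  {in s, forall i, computes (progs i) (mxs i)} ->
  computes (flatten (map progs s)) (foldr (fun i M => mxs i *m M) 1%:M s).
Proof.
elim: s => [|i s IHs] /= ok_s; first exact: computes_nil.
apply: computes_cat; first by apply: ok_s; rewrite inE eqxx.
by apply: IHs => j sj; apply: ok_s; rewrite inE sj orbT.
Qed.

Lemma size_flatten_map_le1 T n (progs : T -> seq (bitop n)) s :
  (forall i, size (progs i) <= 1)%N -> (size (flatten (map progs s)) <= size s)%N.
Proof.
move=> le1; elim: s => [//|i s IHs] /=; rewrite size_cat.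
by have := le1 i; lia.
Qed.

Lemma sum_mul_eq_natr (R : pzSemiRingType) (I : finType) (F : I -> R) c :
  \sum_l F l * (l == c)%:R = F c.
Proof.
rewrite (bigD1 c) //= eqxx mulr1 big1 ?addr0 // => l /negbTE->.
exact: mulr0.
Qed.

(* The single bit operation realizing [Smx N i] or [Amx N i] acts on the
   0-based positions [i.-1] and [i]; it is empty when they are out of range. *)
Definition adjacent_op N (op : 'I_N -> 'I_N -> bitop N) i : seq (bitop N) :=
  match (insub i.-1 : option 'I_N), (insub i : option 'I_N) with
  | Some a, Some b => [:: op a b] | _, _ => [::] end.

Lemma size_adjacent_op N op i : (size (@adjacent_op N op i) <= 1)%N.
Proof.
rewrite /adjacent_op.
by case: (insub i.-1 : option 'I_N) => [a|]; case: (insub i : option 'I_N).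
Qed.

Lemma adjacent_opP N op i : (0 < i < N)%N ->
  exists a b : 'I_N, [/\ val a = i.-1, val b = i & adjacent_op op i = [:: op a b]].
Proof.
move=> /andP[i_gt0 i_ltN]; rewrite /adjacent_op.
case: insubP => [a _ <-|]; last by lia.
by case: insubP => [b _ <-|]; [exists a, b | lia].
Qed.

Lemma step_swap N (a b : 'I_N) i : val a = i.-1 -> val b = i ->
  forall x, step x (SwapI a b) = x *m Smx N i.
Proof.
move=> ai bi x; apply/rowP => k; rewrite !mxE.
set c := if k == a then b else if k == b then a else k.
have -> : \sum_l x 0 l * Smx N i l k = \sum_l x 0 l * (l == c)%:R.
  apply: eq_bigr => l _; rewrite mxE /swap_idx -ai -bi -val_eqE /c.
  by rewrite !(fun_if val) -!val_eqE.
by rewrite sum_mul_eq_natr.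
Qed.

Lemma step_xor N (a b : 'I_N) i : (0 < i)%N -> val a = i.-1 -> val b = i ->
  forall x, step x (XorI a b) = x *m Amx N i.
Proof.
move=> i_gt0 ai bi x; apply/rowP => k; rewrite !mxE.
case: ifP => [/eqP-> | /negbT ka].
  have nab : (val a == val b) = false by apply/eqP; lia.
  have -> : \sum_l x 0 l * Amx N i l a =
            \sum_l (x 0 l * (l == a)%:R + x 0 l * (l == b)%:R).
    apply: eq_bigr => l _; rewrite mxE ai eqxx /= -mulrDr -natrD -ai -bi -!val_eqE /=.
    by case: (nat_of_ord l =P val a) => [->|]; rewrite ?eqxx ?nab.
  by rewrite big_split !sum_mul_eq_natr.
have -> : \sum_l x 0 l * Amx N i l k = \sum_l x 0 l * (l == k)%:R.
  apply: eq_bigr => l _.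
  by rewrite mxE -ai (negbTE ka : (k == val a :> nat) = false) andFb orbF.
by rewrite sum_mul_eq_natr.
Qed.

Definition Q_prog (IS IA : nat -> pred nat) N : seq (bitop N) :=
  flatten (map (adjacent_op (@SwapI N)) [seq i <- iota 1 N.-1 | IS N i]) ++
  flatten (map (adjacent_op (@XorI N)) [seq i <- iota 1 N.-1 | IA N i]).

Lemma Q_prog_computes IS IA N : computes (Q_prog IS IA N) (Qmx IS IA N).
Proof.
have in_range P i : i \in [seq i <- iota 1 N.-1 | P i] -> (0 < i < N)%N.
  by rewrite mem_filter mem_iota => /andP[_]; lia.
apply: computes_cat; apply: computes_flatten => i /in_range i_range.
  have [a [b [ai bi ->]]] := adjacent_opP (@SwapI N) i_range.
  exact: step_swap.
have [a [b [ai bi ->]]] := adjacent_opP (@XorI N) i_range.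
by apply: step_xor; lia.
Qed.

Lemma size_Q_prog IS IA N : (size (Q_prog IS IA N) <= 2 * N)%N.
Proof.
have le_filter P : (size [seq i <- iota 1 N.-1 | P i] <= N)%N.
  by rewrite size_filter (leq_trans (count_size _ _)) // size_iota leq_pred.
rewrite size_cat mul2n -addnn leq_add //; apply: leq_trans (le_filter _);
  exact: size_flatten_map_le1 (size_adjacent_op _).
Qed.

Section EvenOdd.
Variable k : nat.

Lemma ord_even_proof (a : 'I_(2 ^ k)) : (a.*2 < 2 ^ k.+1)%N.
Proof. by rewrite expnS mul2n ltn_double. Qed.
Lemma ord_odd_proof (a : 'I_(2 ^ k)) : (a.*2.+1 < 2 ^ k.+1)%N.
Proof. by rewrite expnS mul2n ltn_Sdouble. Qed.
Lemma ord_half_proof (j : 'I_(2 ^ k.+1)) : (j./2 < 2 ^ k)%N.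
Proof. by rewrite ltn_half_double -mul2n -expnS. Qed.

Definition ord_even a : 'I_(2 ^ k.+1) := Ordinal (ord_even_proof a).
Definition ord_odd a : 'I_(2 ^ k.+1) := Ordinal (ord_odd_proof a).
Definition ord_half j : 'I_(2 ^ k) := Ordinal (ord_half_proof j).

Lemma ord_evenK : cancel ord_even ord_half.
Proof. by move=> a; apply: val_inj; rewrite /= doubleK. Qed.
Lemma ord_oddK : cancel ord_odd ord_half.
Proof. by move=> a; apply: val_inj; rewrite /= uphalf_double. Qed.

Lemma ord_odd_neq_even a b : ord_odd a != ord_even b.
Proof. by apply/eqP => /(congr1 (odd \o val)) /=; rewrite !odd_double. Qed.

Lemma ord_half_parity (j : 'I_(2 ^ k.+1)) :
  j = if odd j then ord_odd (ord_half j) else ord_even (ord_half j).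
Proof. by apply: val_inj; have := odd_double_half j; case: ifP => /= _; lia. Qed.

Lemma sum_even_odd (V : nmodType) (F : 'I_(2 ^ k.+1) -> V) :
  \sum_j F j = \sum_a F (ord_even a) + \sum_a F (ord_odd a).
Proof.
rewrite (bigID (fun j : 'I_(2 ^ k.+1) => odd j)) [RHS]addrC /=; congr (_ + _).
  rewrite (reindex_onto ord_odd ord_half); last first.
    by move=> j oj; rewrite [RHS]ord_half_parity oj.
  by apply: eq_bigl => a; rewrite ord_oddK eqxx /= odd_double.
rewrite (reindex_onto ord_even ord_half); last first.
  by move=> j /negbTE oj; rewrite [RHS]ord_half_parity oj.
by apply: eq_bigl => a; rewrite ord_evenK eqxx odd_double.
Qed.

End EvenOdd.

Definition restr R n N (f : 'I_n -> 'I_N) (x : 'rV[R]_N) : 'rV[R]_n :=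
  \row_a x 0 (f a).

Definition lift_op n N (f : 'I_n -> 'I_N) (o : bitop n) : bitop N :=
  match o with
  | XorI i j => XorI (f i) (f j)
  | SwapI i j => SwapI (f i) (f j)
  end.

Section LiftedPrograms.
Variables (n m N : nat) (f : 'I_n -> 'I_N) (g : 'I_m -> 'I_N).

Lemma restr_step_lift x o : injective f ->
  restr f (step x (lift_op f o)) = step (restr f x) o.
Proof.
move=> f_inj; apply/rowP => a.
by case: o => i j; rewrite !mxE !(inj_eq f_inj) //; case: (a == i); case: (a == j).
Qed.

Lemma restr_step_lift_disjoint x o : (forall a b, f a != g b) ->
  restr g (step x (lift_op f o)) = restr g x.
Proof.
move=> fg; apply/rowP => b.
have gf a : (g b == f a) = false by rewrite eq_sym (negbTE (fg _ _)).
by case: o => i j; rewrite !mxE !gf.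
Qed.

Lemma restr_run_lift p x : injective f ->
  restr f (run (map (lift_op f) p) x) = run p (restr f x).
Proof.
by move=> f_inj; elim: p x => [//|o p IHp] x /=; rewrite IHp restr_step_lift.
Qed.

Lemma restr_run_lift_disjoint p x : (forall a b, f a != g b) ->
  restr g (run (map (lift_op f) p) x) = restr g x.
Proof.
by move=> fg; elim: p x => [//|o p IHp] x /=; rewrite IHp restr_step_lift_disjoint.
Qed.

End LiftedPrograms.

Definition interleave R k (v w : 'rV[R]_(2 ^ k)) : 'rV[R]_(2 ^ k.+1) :=
  \row_j (if odd j then w else v) 0 (ord_half j).

Section Interleave.
Variables (R : Type) (k : nat).
Implicit Types v w : 'rV[R]_(2 ^ k).

Lemma restr_interleave_even v w : restr (@ord_even k) (interleave v w) = v.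
Proof. by apply/rowP => a; rewrite !mxE odd_double ord_evenK. Qed.

Lemma restr_interleave_odd v w : restr (@ord_odd k) (interleave v w) = w.
Proof. by apply/rowP => a; rewrite !mxE /= odd_double ord_oddK. Qed.

Lemma interleave_restr (x : 'rV[R]_(2 ^ k.+1)) :
  interleave (restr (@ord_even k) x) (restr (@ord_odd k) x) = x.
Proof.
by apply/rowP => j; rewrite !mxE [in RHS](ord_half_parity j); case: ifP; rewrite mxE.
Qed.

End Interleave.

Section Butterfly.
Variable k : nat.

Definition butterfly : seq (bitop (2 ^ k.+1)) :=
  [seq XorI (ord_even a) (ord_odd a) | a <- ord_enum (2 ^ k)].

Lemma run_xor_pairs (s : seq 'I_(2 ^ k)) x : uniq s ->
  run [seq XorI (ord_even a) (ord_odd a) | a <- s] x =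
  interleave (restr (@ord_even k) x + \row_a (if a \in s then x 0 (ord_odd a) else 0))
             (restr (@ord_odd k) x).
Proof.
elim: s x => [|a s IHs] x /=.
  move=> _; rewrite -[LHS]interleave_restr; congr interleave.
  by apply/rowP => b; rewrite !mxE addr0.
case/andP => a_notin_s /IHs ->; congr interleave; apply/rowP => b; rewrite !mxE.
  rewrite (can_eq (@ord_evenK _)) in_cons (negbTE (ord_odd_neq_even _ _)) /=.
  by case: (b =P a) => [->|_]; rewrite ?(negbTE a_notin_s) ?addr0.
by rewrite (negbTE (ord_odd_neq_even _ _)).
Qed.

Lemma run_butterfly x :
  run butterfly x =
  interleave (restr (@ord_even k) x + restr (@ord_odd k) x) (restr (@ord_odd k) x).
Proof.
rewrite run_xor_pairs ?ord_enum_uniq //; congr (interleave (_ + _) _).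
by apply/rowP => a; rewrite !mxE mem_ord_enum.
Qed.

End Butterfly.

Section KroneckerPolar.
Variables (k : nat) (A : 'M['F_2]_(2 ^ k)).

Definition kron_polar : 'M['F_2]_(2 ^ k.+1) :=
  castmx (esym (expnSr 2 k), esym (expnSr 2 k)) (kron A Gpolar).

Lemma kron_polarE i j :
  kron_polar i j = A (ord_half i) (ord_half j) * (~~ odd j || odd i)%:R.
Proof.
have half_cast l : ord_div (cast_ord (esym (esym (expnSr 2 k))) l) = ord_half l.
  by apply: val_inj; rewrite /= divn2.
rewrite castmxE !mxE !half_cast /= !modn2.
by case: (odd i); case: (odd j).
Qed.

Lemma mul_kron_polar u :
  u *m kron_polar =
  interleave ((restr (@ord_even k) u + restr (@ord_odd k) u) *m A)
             (restr (@ord_odd k) u *m A).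
Proof.
apply/rowP => j; rewrite !mxE sum_even_odd.
under eq_bigr do rewrite kron_polarE ord_evenK odd_double orbF.
under [X in _ + X]eq_bigr do rewrite kron_polarE ord_oddK /= odd_double orbT mulr1.
case: ifP => oj /=; rewrite !mxE.
  rewrite big1 ?add0r => [|a _]; last by rewrite !mulr0.
  by apply: eq_bigr => a _; rewrite mxE.
by rewrite -big_split /=; apply: eq_bigr => a _; rewrite !mxE mulr1 mulrDl.
Qed.

End KroneckerPolar.

Definition kron_polar_prog k (p : seq (bitop (2 ^ k))) : seq (bitop (2 ^ k.+1)) :=
  butterfly k ++ map (lift_op (@ord_even k)) p ++ map (lift_op (@ord_odd k)) p.

Lemma kron_polar_prog_computes k (p : seq (bitop (2 ^ k))) A :
  computes p A -> computes (kron_polar_prog p) (kron_polar A).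
Proof.
move=> pA x; rewrite mul_kron_polar !run_cat run_butterfly.
have even_inj := can_inj (@ord_evenK k); have odd_inj := can_inj (@ord_oddK k).
have odd_even a b : @ord_odd k a != ord_even b by exact: ord_odd_neq_even.
have even_odd a b : @ord_even k a != ord_odd b by rewrite eq_sym.
set y := interleave _ _; set z := run _ y.
have z_even :
    restr (@ord_even k) z = (restr (@ord_even k) x + restr (@ord_odd k) x) *m A.
  by rewrite restr_run_lift // restr_interleave_even pA.
have z_odd : restr (@ord_odd k) z = restr (@ord_odd k) x.
  by rewrite restr_run_lift_disjoint // restr_interleave_odd.
rewrite -[LHS]interleave_restr restr_run_lift // restr_run_lift_disjoint //.
by rewrite z_even z_odd pA.
Qed.

Lemma size_kron_polar_prog k (p : seq (bitop (2 ^ k))) :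
  size (kron_polar_prog p) = (2 ^ k + 2 * size p)%N.
Proof.
by rewrite !size_cat !size_map -(size_map val) val_ord_enum size_iota addnn mul2n.
Qed.

Fixpoint abs_prog (IS IA : nat -> pred nat) k : seq (bitop (2 ^ k)) :=
  if k is k'.+1 then Q_prog IS IA (2 ^ k'.+1) ++ kron_polar_prog (abs_prog IS IA k')
  else [::].

Lemma abs_prog_computes IS IA k : computes (abs_prog IS IA k) (abs_mx IS IA k).
Proof.
elim: k => [|k IHk] /=; first exact: computes_nil.
by apply: computes_cat; [exact: Q_prog_computes | exact: kron_polar_prog_computes].
Qed.

Lemma size_abs_prog IS IA k : (size (abs_prog IS IA k) <= 4 * (2 ^ k * k))%N.
Proof.
elim: k => [//|k IHk] /=.
have := size_Q_prog IS IA (2 ^ k.+1).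
by rewrite size_cat size_kron_polar_prog expnS; nia.
Qed.

Theorem proposition1 :
  exists C : nat,
    forall (m : nat) (IS IA : nat -> pred nat),
      (1 <= m)%N -> abs_valid IS IA m ->
      exists p : seq (bitop (2 ^ m)),
        (size p <= C * (2 ^ m * m))%N /\
        forall u : 'rV['F_2]_(2 ^ m), run p u = u *m abs_mx IS IA m.
Proof.
exists 4 => m IS IA _ _; exists (abs_prog IS IA m).
by split; [exact: size_abs_prog | exact: abs_prog_computes].
Qed.
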